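(* Let $\rho>0$, $p\ge2$, and let $W:\mathbb{R}\to\mathbb{R}$ be a strictly convex $C^3$ function with $W''\ge c_0>0$, $W(u)\ge\max(0,c_1|u|^p-c_2)$ ($c_1,c_2>0$), and $W'(u)/|u|^p\to0$ as $|u|\to\infty$. For $N\in\{1,2,\dots\}$ let $\epsilon=2\pi/N$ and let $\{x_i(t)\}_{i=0}^{N-1}$ solve $\frac{d}{dt}(\epsilon\rho\dot x_i)=W'\big(\frac{x_{i+1}-x_i}{\epsilon}\big)-W'\big(\frac{x_i-x_{i-1}}{\epsilon}\big)$, with the periodic convention $x_{N+i}=x_i+2\pi$, so that the energy $\sum_{i=0}^{N-1}\big[\frac{\epsilon\rho}{2}\dot x_i^2+\epsilon W\big(\frac{x_{i+1}-x_i}{\epsilon}\big)\big]$ is constant in time. Define, with $I^i_\epsilon=[i\epsilon,(i+1)\epsilon)$, $$y^\epsilon(t,X)=\sum_{i=0}^{N-1}\Big(x_i+\frac{X-i\epsilon}{\epsilon}(x_{i+1}-x_i)\Big)\mathbf{1}_{I^i_\epsilon}(X),\qquad\tilde y^\epsilon(t,X)=\sum_{i=0}^{N-1}x_i\mathbf{1}_{I^i_\epsilon}(X).$$ Assume the initial data $\{(x_i(0),\dot x_i(0))\}_{i=0}^{N-1}$ are such that the energy is bounded by some $E_0<\infty$ independent of $N$. Then for each such $\epsilon$ the functions $y^\epsilon$ and $\partial_ty^\epsilon$ are bounded continuous functions of $(t,X)$, and there exists a constant $C=C(E_0,\rho,c_1,c_2)$ such that, with $Q=\mathbb{R}/2\pi\mathbb{Z}$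 (identified with $[0,2\pi)$), (i) $\sup_t\big(\|\partial_ty^\epsilon\|_{L^2(Q)}+\|\partial_Xy^\epsilon\|_{L^p(Q)}+\|\partial_t\tilde y^\epsilon\|_{L^2(Q)}\big)\le C$; (ii) $\sup_t\|\tilde y^\epsilon-y^\epsilon\|_{L^p(Q)}\le C\epsilon$. *)

From Stdlib Require Import Reals Lra ZArith.
From Coquelicot Require Import Coquelicot.
Open Scope R_scope.

Definition powr (x p : R) : R := if Rle_dec x 0 then 0 else Rpower x p.

Fixpoint sumR (n : nat) (f : nat -> R) : R :=
  match n with O => 0 | S m => sumR m f + f m end.

Definition ind (a b X : R) : R :=
  if Rle_dec a X then (if Rlt_dec X b then 1 else 0) else 0.

Definition epsN (N : nat) : R := 2 * PI / INR N.

Definition xi (x : Z -> R -> R) (i : nat) (t : R) : R := x (Z.of_nat i) t.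

Definition yeps (N : nat) (x : Z -> R -> R) (t X : R) : R :=
  let e := epsN N in
  sumR N (fun i => (xi x i t + (X - INR i * e) / e * (xi x (S i) t - xi x i t))
                   * ind (INR i * e) (INR (S i) * e) X).

Definition ytil (N : nat) (x : Z -> R -> R) (t X : R) : R :=
  let e := epsN N in
  sumR N (fun i => xi x i t * ind (INR i * e) (INR (S i) * e) X).

Definition LnormQ (q : R) (f : R -> R) : R :=
  powr (RInt (fun X => powr (Rabs (f X)) q) 0 (2 * PI)) (1 / q).

Definition energy (N : nat) (rho : R) (W : R -> R) (x : Z -> R -> R) (t : R) : R :=
  let e := epsN N in
  sumR N (fun i => e * rho / 2 * (Derive (xi x i) t) ^ 2
                   + e * W ((xi x (S i) t - xi x i t) / e)).

Definition strictly_convex (W : R -> R) : Prop :=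
  forall u v l, u <> v -> 0 < l < 1 ->
    W (l * u + (1 - l) * v) < l * W u + (1 - l) * W v.

(* The discrete energy is conserved: the energy of cell i changes at the rate at which
   the springs at its two ends do work, and these rates telescope around the periodic
   chain.  Since W >= 0 and W u >= c1 |u|^p - c2, the conserved energy bounds, uniformly
   in time and in N, both the kinetic sum  sum_i eps x_i'^2 <= 2 E0 / rho  and the strain
   sum  sum_i eps |(x_(i+1) - x_i) / eps|^p <= (E0 + 2 pi c2) / c1.  On each cell the
   interpolants are explicit affine (or constant) functions of the nodes, so every integral
   in (i) and (ii) is dominated cell by cell by one of these sums; in (ii) the integrand is
   at most eps^p times the strain term, whence the factor eps after taking the p-th root.
   The constant does not depend on p because a^(1/q) <= 1 + a for q >= 1.  Joint
   continuity of y^eps and of its time derivative comes from writing the interpolant as a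
   sum of clamped ramps, which is Lipschitz in X and in the nodes. *)

From Pilot Require Import Defs.
From Stdlib Require Import Reals Lra Lia ZArith.
From Coquelicot Require Import Coquelicot.
Open Scope R_scope.

Lemma Rpower_pos a q : 0 < Rpower a q.
Proof. apply exp_pos. Qed.

Lemma Rpower_1_base q : Rpower 1 q = 1.
Proof. unfold Rpower; rewrite ln_1, Rmult_0_r; apply exp_0. Qed.

Lemma powr_ge0 a q : 0 <= powr a q.
Proof. unfold powr; destruct Rle_dec; [lra | left; apply Rpower_pos]. Qed.

Lemma powr_le_compat a b q : 0 <= q -> a <= b -> powr a q <= powr b q.
Proof.
  intros Hq Hab; unfold powr.
  destruct (Rle_dec a 0), (Rle_dec b 0); try lra.
  - left; apply Rpower_pos.
  - apply Rle_Rpower_l; lra.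
Qed.

Lemma powr_le_1_plus a r : 0 < r <= 1 -> powr a r <= 1 + Rmax 0 a.
Proof.
  intros Hr; unfold powr; destruct Rle_dec as [Ha | Ha].
  { pose proof (Rmax_l 0 a); lra. }
  rewrite Rmax_right by lra.
  destruct (Rle_dec a 1).
  - apply Rle_trans with (Rpower 1 r); [apply Rle_Rpower_l; lra |].
    rewrite Rpower_1_base; lra.
  - apply Rle_trans with (Rpower a 1); [apply Rle_Rpower; lra |].
    rewrite Rpower_1; lra.
Qed.

Lemma powr_abs_2 u : powr (Rabs u) 2 = u ^ 2.
Proof.
  unfold powr; destruct Rle_dec.
  - assert (Hu : u = 0) by (apply Rabs_eq_0; pose proof (Rabs_pos u); lra).
    subst; simpl; ring.
  - replace 2 with (INR 2) by (simpl; ring).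
    rewrite Rpower_pow, pow2_abs by lra; reflexivity.
Qed.

Lemma powr_mult a b q : 0 < a -> 0 <= b -> powr (a * b) q = Rpower a q * powr b q.
Proof.
  intros Ha Hb; unfold powr.
  destruct (Rle_dec b 0), (Rle_dec (a * b) 0); try nra.
  rewrite Rpower_mult_distr; lra.
Qed.

Lemma powr_Rpower_root e p K : 0 < e -> 0 < K -> 0 < p ->
  powr (Rpower e p * K) (1 / p) = e * powr K (1 / p).
Proof.
  intros He HK Hp.
  rewrite powr_mult, Rpower_mult by (try apply Rpower_pos; lra).
  replace (p * (1 / p)) with 1 by (field; lra).
  rewrite Rpower_1; lra.
Qed.

Lemma locally_Rabs (x d : R) (P : R -> Prop) :
  0 < d -> (forall y, Rabs (y - x) < d -> P y) -> locally x P.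
Proof. intros Hd H; exists (mkposreal d Hd); intros y Hy; apply H, Hy. Qed.

Lemma powr_continuous p u : 1 <= p -> continuous (fun y => powr y p) u.
Proof.
  intros Hp.
  destruct (Rtotal_order u 0) as [Hu | [-> | Hu]].
  - apply continuous_ext_loc with (fun _ => 0); [| apply continuous_const].
    apply locally_Rabs with (- u); [lra |]; intros y Hy.
    apply Rabs_def2 in Hy.
    unfold powr; destruct Rle_dec; lra.
  - (* near 0, powr y p <= |y| because p >= 1 *)
    apply continuity_pt_filterlim; intros eps Heps.
    exists (Rmin 1 eps); split; [apply Rmin_pos; lra |].
    intros y [_ Hy]; simpl in *; unfold R_dist in *; rewrite Rminus_0_r in Hy.
    pose proof (Rmin_l 1 eps); pose proof (Rmin_r 1 eps).
    replace (powr 0 p) with 0 by (unfold powr; destruct Rle_dec; lra).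
    rewrite Rminus_0_r, Rabs_right by apply Rle_ge, powr_ge0.
    unfold powr; destruct Rle_dec; [lra |].
    rewrite Rabs_right in Hy by lra.
    replace p with (1 + (p - 1)) by ring.
    rewrite Rpower_plus, Rpower_1 by lra.
    assert (Rpower y (p - 1) <= 1).
    { apply Rle_trans with (Rpower 1 (p - 1)); [apply Rle_Rpower_l; lra |].
      rewrite Rpower_1_base; lra. }
    pose proof (Rpower_pos y (p - 1)); nra.
  - apply continuous_ext_loc with (fun y => exp (p * ln y)).
    + apply locally_Rabs with u; [lra |]; intros y Hy.
      apply Rabs_def2 in Hy.
      unfold powr; destruct Rle_dec; [lra | reflexivity].
    + apply (ex_derive_continuous (K := R_AbsRing) (V := R_NormedModule)).
      auto_derive; lra.
Qed.

Lemma sumR_ext n f g : (forall i, (i < n)%nat -> f i = g i) -> sumR n f = sumR n g.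
Proof. induction n; simpl; intros H; auto. rewrite IHn, H by (auto; lia); reflexivity. Qed.

Lemma sumR_le n f g : (forall i, (i < n)%nat -> f i <= g i) -> sumR n f <= sumR n g.
Proof.
  induction n; simpl; intros H; [lra |].
  pose proof (IHn ltac:(auto)); pose proof (H n ltac:(lia)); lra.
Qed.

Lemma sumR_plus n f g : sumR n (fun i => f i + g i) = sumR n f + sumR n g.
Proof. induction n; simpl; [ring | rewrite IHn; ring]. Qed.

Lemma sumR_scal n c f : sumR n (fun i => c * f i) = c * sumR n f.
Proof. induction n; simpl; [ring | rewrite IHn; ring]. Qed.

Lemma sumR_const n c : sumR n (fun _ => c) = INR n * c.
Proof. induction n; simpl sumR; [simpl; ring | rewrite IHn, S_INR; ring]. Qed.

Lemma sumR_ge0 n f : (forall i, (i < n)%nat -> 0 <= f i) -> 0 <= sumR n f.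
Proof. intros H; rewrite <- (Rmult_0_r (INR n)), <- sumR_const; apply sumR_le, H. Qed.

Lemma sumR_term_le n f j :
  (forall i, (i < n)%nat -> 0 <= f i) -> (j < n)%nat -> f j <= sumR n f.
Proof.
  induction n; simpl; intros H Hj; [lia |].
  destruct (Nat.eq_dec j n) as [-> | Hjn].
  - pose proof (sumR_ge0 n f ltac:(auto)); lra.
  - pose proof (IHn ltac:(auto) ltac:(lia)); pose proof (H n ltac:(lia)); lra.
Qed.

Lemma sumR_single n f i :
  (i < n)%nat -> (forall j, (j < n)%nat -> j <> i -> f j = 0) -> sumR n f = f i.
Proof.
  induction n; simpl; intros Hi H; [lia |].
  destruct (Nat.eq_dec i n) as [-> | Hin].
  - rewrite (sumR_ext n f (fun _ => 0)), sumR_const by (intros; apply H; lia); ring.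
  - rewrite IHn, (H n) by (auto; lia); ring.
Qed.

Lemma sumR_shift n f : sumR n (fun i => f (S i)) + f O = sumR n f + f n.
Proof. induction n; simpl sumR; [ring | lra]. Qed.

Lemma sumR_telescope n g : sumR n (fun i => g (S i) - g i) = g n - g O.
Proof. induction n; simpl; [ring | rewrite IHn; ring]. Qed.

Lemma continuous_eps_delta (f : R -> R) t : continuous f t -> forall eps, 0 < eps ->
  exists d, 0 < d /\ forall t', Rabs (t' - t) < d -> Rabs (f t' - f t) < eps.
Proof.
  intros H eps Heps.
  destruct (proj2 (continuity_pt_filterlim f t) H eps Heps) as [d [Hd Hf]].
  exists d; split; auto; intros t' Ht'.
  destruct (Req_dec t' t) as [-> | Hne].
  - rewrite Rminus_eq_0, Rabs_R0; auto.
  - apply (Hf t'); repeat split; auto.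
Qed.

Lemma continuous_family_eps_delta (f : nat -> R -> R) n t :
  (forall j, (j <= n)%nat -> continuous (f j) t) -> forall eps, 0 < eps ->
  exists d, 0 < d /\ forall t', Rabs (t' - t) < d ->
    forall j, (j <= n)%nat -> Rabs (f j t' - f j t) < eps.
Proof.
  induction n; intros H eps Heps.
  - destruct (continuous_eps_delta (f O) t (H O (le_n O)) eps Heps) as [d [Hd Hf]].
    exists d; split; auto; intros t' Ht' j Hj.
    replace j with O by lia; auto.
  - destruct (IHn ltac:(auto) eps Heps) as [d1 [Hd1 Hf1]].
    destruct (continuous_eps_delta (f (S n)) t (H (S n) (le_n _)) eps Heps)
      as [d2 [Hd2 Hf2]].
    exists (Rmin d1 d2); split; [apply Rmin_pos; auto |]; intros t' Ht' j Hj.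
    pose proof (Rmin_l d1 d2); pose proof (Rmin_r d1 d2).
    destruct (Nat.eq_dec j (S n)) as [-> | Hjn]; [apply Hf2 | apply Hf1]; lra || lia.
Qed.

Lemma Rabs_lerp_le c d l : 0 <= l <= 1 -> Rabs (c + l * (d - c)) <= Rabs c + Rabs d.
Proof.
  intros Hl; replace (c + l * (d - c)) with ((1 - l) * c + l * d) by ring.
  eapply Rle_trans; [apply Rabs_triang |].
  rewrite !Rabs_mult, (Rabs_right (1 - l)), (Rabs_right l) by lra.
  pose proof (Rabs_pos c); pose proof (Rabs_pos d); nra.
Qed.

Lemma lerp_sq_le c d l : 0 <= l <= 1 -> (c + l * (d - c)) ^ 2 <= c ^ 2 + d ^ 2.
Proof.
  intros Hl.
  (* convexity of the square: the gap is l (1 - l) (c - d)^2 *)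
  assert (0 <= l * (1 - l) * (c - d) ^ 2) by (apply Rmult_le_pos; [nra | apply pow2_ge_0]).
  pose proof (pow2_ge_0 c); pose proof (pow2_ge_0 d); nra.
Qed.

Section Cells.
Variable e : R.
Hypothesis He : 0 < e.

Lemma cell_end_le j i : (j < i)%nat -> INR (S j) * e <= INR i * e.
Proof. intros H; apply Rmult_le_compat_r; [lra | apply le_INR; lia]. Qed.

Lemma cell_coord_bound i X : INR i * e <= X <= INR (S i) * e -> 0 <= (X - INR i * e) / e <= 1.
Proof.
  intros HX; rewrite S_INR in HX; split.
  - apply Rdiv_le_0_compat; lra.
  - apply Rmult_le_reg_r with e; auto; field_simplify; lra.
Qed.

Lemma ind_cell_in i X : INR i * e <= X < INR (S i) * e -> Defs.ind (INR i * e) (INR (S i) * e) X = 1.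
Proof. intros [H1 H2]; unfold Defs.ind; destruct Rle_dec; [destruct Rlt_dec |]; lra. Qed.

Lemma ind_cell_out i j X : INR i * e <= X < INR (S i) * e -> j <> i ->
  Defs.ind (INR j * e) (INR (S j) * e) X = 0.
Proof.
  intros [H1 H2] Hij; unfold Defs.ind.
  destruct (Nat.lt_ge_cases j i) as [Hji | Hij'].
  - pose proof (cell_end_le j i Hji); destruct Rle_dec; [destruct Rlt_dec |]; lra.
  - pose proof (cell_end_le i j ltac:(lia)); destruct Rle_dec; lra.
Qed.

Lemma sumR_ind_cell n F i X : (i < n)%nat -> INR i * e <= X < INR (S i) * e ->
  sumR n (fun j => F j * Defs.ind (INR j * e) (INR (S j) * e) X) = F i.
Proof.
  intros Hi HX; rewrite (sumR_single n _ i Hi).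
  - rewrite ind_cell_in by exact HX; ring.
  - intros j _ Hji; rewrite (ind_cell_out i j X HX Hji); ring.
Qed.

Lemma exists_cell n X : 0 <= X < INR n * e ->
  exists i, (i < n)%nat /\ INR i * e <= X < INR (S i) * e.
Proof.
  induction n; intros [H1 H2]; [simpl in H2; lra |].
  destruct (Rlt_dec X (INR n * e)).
  - destruct IHn as [i [Hi HX]]; [lra |]; exists i; split; auto.
  - exists n; split; [lia | lra].
Qed.

Lemma RInt_cells_le (g : R -> R) (h : nat -> R -> R) (b : nat -> R) n :
  (forall i X, (i < n)%nat -> INR i * e <= X <= INR (S i) * e -> continuous (h i) X) ->
  (forall i X, (i < n)%nat -> INR i * e < X < INR (S i) * e -> g X = h i X) ->
  (forall i X, (i < n)%nat -> INR i * e < X < INR (S i) * e -> h i X <= b i) ->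
  ex_RInt g 0 (INR n * e) /\ RInt g 0 (INR n * e) <= sumR n (fun i => e * b i).
Proof.
  induction n; intros Hc Hg Hb.
  { simpl; rewrite Rmult_0_l, RInt_point.
    split; [apply ex_RInt_point | apply Req_le; reflexivity]. }
  destruct IHn as [Hex Hle]; auto.
  assert (Hab : INR n * e <= INR (S n) * e) by (rewrite S_INR; lra).
  assert (Hh : ex_RInt (h n) (INR n * e) (INR (S n) * e)).
  { apply (ex_RInt_continuous (V := R_CompleteNormedModule)); intros z Hz.
    rewrite Rmin_left, Rmax_right in Hz by lra; auto. }
  assert (Hgn : ex_RInt g (INR n * e) (INR (S n) * e)).
  { apply ex_RInt_ext with (h n); auto; intros X HX.
    rewrite Rmin_left, Rmax_right in HX by lra; symmetry; auto. }
  assert (Hlast : RInt g (INR n * e) (INR (S n) * e) <= e * b n).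
  { eapply Rle_trans.
    - apply RInt_le with (g := fun _ => b n); auto; [apply ex_RInt_const |].
      intros X HX; rewrite (Hg n X) by auto; auto.
    - rewrite RInt_const, S_INR; unfold scal; simpl; unfold mult; simpl; lra. }
  split; [apply ex_RInt_Chasles with (INR n * e); auto |].
  rewrite <- (RInt_Chasles g 0 (INR n * e) (INR (S n) * e)) by auto.
  change (RInt g 0 (INR n * e) + RInt g (INR n * e) (INR (S n) * e)
          <= sumR n (fun i => e * b i) + e * b n); lra.
Qed.

(* [clamp] and [ramp_sum] give a formula for the piecewise-linear interpolant of the
   nodes [a j] that is valid on all of [0, n e] at once; it is Lipschitz in [X] and in
   the nodes, which yields joint continuity without case analysis on the cell. *)
Definition clamp (u : R) : R := Rmin e (Rmax 0 u).

Definition ramp_sum (n : nat) (a : nat -> R) (X : R) : R :=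
  a O + sumR n (fun j => (a (S j) - a j) / e * clamp (X - INR j * e)).

Lemma clamp_bound u : 0 <= clamp u <= e.
Proof. unfold clamp, Rmin, Rmax; repeat destruct Rle_dec; lra. Qed.

Lemma clamp_lipschitz u v : Rabs (clamp u - clamp v) <= Rabs (u - v).
Proof. unfold clamp, Rmin, Rmax, Rabs; repeat destruct Rle_dec; repeat destruct Rcase_abs; lra. Qed.

Lemma ramp_partial_past n a X : INR n * e <= X ->
  sumR n (fun j => (a (S j) - a j) / e * clamp (X - INR j * e)) = a n - a O.
Proof.
  intros HX; rewrite <- sumR_telescope; apply sumR_ext; intros j Hj.
  pose proof (cell_end_le j n Hj) as Hjn; rewrite S_INR in Hjn.
  unfold clamp; rewrite Rmax_right, Rmin_left by lra; field; lra.
Qed.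

Lemma ramp_partial_cell n a i X : (i < n)%nat -> INR i * e <= X < INR (S i) * e ->
  sumR n (fun j => (a (S j) - a j) / e * clamp (X - INR j * e))
  = a i - a O + (X - INR i * e) / e * (a (S i) - a i).
Proof.
  induction n; intros Hi HX; [lia |]; simpl sumR.
  destruct (Nat.eq_dec i n) as [-> | Hin].
  - rewrite ramp_partial_past by lra; rewrite S_INR in HX.
    unfold clamp; rewrite Rmax_right, Rmin_right by lra; field; lra.
  - rewrite IHn by (auto; lia); pose proof (cell_end_le i n ltac:(lia)).
    unfold clamp; rewrite Rmax_left, Rmin_right by lra; ring.
Qed.

Lemma ramp_sum_cell n a i X : (i < n)%nat -> INR i * e <= X < INR (S i) * e ->
  a i + (X - INR i * e) / e * (a (S i) - a i) = ramp_sum n a X.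
Proof. intros Hi HX; unfold ramp_sum; rewrite (ramp_partial_cell n a i X Hi HX); ring. Qed.

Lemma ramp_term_dist a0 a1 b0 b1 u w D :
  0 <= u <= e -> Rabs (a0 - b0) <= D -> Rabs (a1 - b1) <= D ->
  Rabs ((a1 - a0) / e * u - (b1 - b0) / e * w)
  <= 2 * D + Rabs (b1 - b0) / e * Rabs (u - w).
Proof.
  intros Hu Ha Hb.
  replace ((a1 - a0) / e * u - (b1 - b0) / e * w)
    with (((a1 - b1) + - (a0 - b0)) * (u / e) + (b1 - b0) / e * (u - w)) by (field; lra).
  eapply Rle_trans; [apply Rabs_triang | apply Rplus_le_compat].
  - assert (Hue : 0 <= u / e <= 1).
    { split; [apply Rdiv_le_0_compat; lra |].
      apply Rmult_le_reg_r with e; auto; field_simplify; lra. }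
    assert (Hab : Rabs ((a1 - b1) + - (a0 - b0)) <= 2 * D).
    { eapply Rle_trans; [apply Rabs_triang | rewrite Rabs_Ropp; lra]. }
    rewrite Rabs_mult, (Rabs_right (u / e)) by lra.
    pose proof (Rabs_pos ((a1 - b1) + - (a0 - b0))); nra.
  - unfold Rdiv; rewrite !Rabs_mult, Rabs_inv, (Rabs_right e) by lra; lra.
Qed.

Lemma ramp_partial_dist n a b X X' D : (forall j, (j <= n)%nat -> Rabs (a j - b j) <= D) ->
  Rabs (sumR n (fun j => (a (S j) - a j) / e * clamp (X' - INR j * e))
        - sumR n (fun j => (b (S j) - b j) / e * clamp (X - INR j * e)))
  <= 2 * INR n * D + sumR n (fun j => Rabs (b (S j) - b j) / e) * Rabs (X' - X).
Proof.
  induction n; intros HD.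
  { simpl; rewrite Rminus_0_r, Rabs_R0; pose proof (Rabs_pos (X' - X)); lra. }
  simpl sumR; rewrite S_INR.
  pose proof (IHn ltac:(auto)) as IH.
  pose proof (ramp_term_dist (a n) (a (S n)) (b n) (b (S n)) (clamp (X' - INR n * e))
                (clamp (X - INR n * e)) D (clamp_bound _) (HD n ltac:(lia))
                (HD (S n) ltac:(lia))) as Hterm.
  assert (Hlip : Rabs (b (S n) - b n) / e * Rabs (clamp (X' - INR n * e) - clamp (X - INR n * e))
                 <= Rabs (b (S n) - b n) / e * Rabs (X' - X)).
  { apply Rmult_le_compat_l; [apply Rdiv_le_0_compat; [apply Rabs_pos | lra] |].
    replace (X' - X) with (X' - INR n * e - (X - INR n * e)) by ring.
    apply clamp_lipschitz. }
  match goal with |- Rabs (?sa + ?ta - (?sb + ?tb)) <= _ =>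
    replace (sa + ta - (sb + tb)) with ((sa - sb) + (ta - tb)) by ring end.
  eapply Rle_trans; [apply Rabs_triang | lra].
Qed.

Lemma ramp_sum_dist n a b X X' D : (forall j, (j <= n)%nat -> Rabs (a j - b j) <= D) ->
  Rabs (ramp_sum n a X' - ramp_sum n b X)
  <= (1 + 2 * INR n) * D + sumR n (fun j => Rabs (b (S j) - b j) / e) * Rabs (X' - X).
Proof.
  intros HD; unfold ramp_sum.
  pose proof (ramp_partial_dist n a b X X' D HD); pose proof (HD O ltac:(lia)).
  match goal with |- Rabs (?a0 + ?sa - (?b0 + ?sb)) <= _ =>
    replace (a0 + sa - (b0 + sb)) with ((a0 - b0) + (sa - sb)) by ring end.
  eapply Rle_trans; [apply Rabs_triang | lra].
Qed.

Lemma ramp_sum_continuous n (a : nat -> R -> R) t X :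
  (forall j, (j <= n)%nat -> continuous (a j) t) -> forall eps, 0 < eps ->
  exists d, 0 < d /\ forall t' X', Rabs (t' - t) < d -> Rabs (X' - X) < d ->
    Rabs (ramp_sum n (fun j => a j t') X' - ramp_sum n (fun j => a j t) X) < eps.
Proof.
  intros Hc eps Heps.
  pose proof (pos_INR n).
  set (D := eps / (2 * (1 + 2 * INR n))).
  assert (HD : 0 < D) by (apply Rdiv_lt_0_compat; lra).
  destruct (continuous_family_eps_delta a n t Hc D HD) as [d1 [Hd1 Hf]].
  set (L := sumR n (fun j => Rabs (a (S j) t - a j t) / e)).
  assert (HL : 0 <= L).
  { apply sumR_ge0; intros; apply Rdiv_le_0_compat; [apply Rabs_pos | lra]. }
  set (d2 := eps / (2 * (L + 1))).
  assert (Hd2 : 0 < d2) by (apply Rdiv_lt_0_compat; lra).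
  exists (Rmin d1 d2); split; [apply Rmin_pos; auto |]; intros t' X' Ht HX.
  pose proof (Rmin_l d1 d2); pose proof (Rmin_r d1 d2).
  eapply Rle_lt_trans.
  { apply ramp_sum_dist with (D := D); intros j Hj; left; apply Hf; auto; lra. }
  cbv beta; fold L.
  assert (HDn : (1 + 2 * INR n) * D = eps / 2) by (unfold D; field; lra).
  assert (HLd : L * d2 < eps / 2).
  { unfold d2; apply Rmult_lt_reg_r with (2 * (L + 1)); [lra |].
    replace (L * (eps / (2 * (L + 1))) * (2 * (L + 1))) with (L * eps) by (field; lra).
    nra. }
  assert (L * Rabs (X' - X) <= L * d2) by (apply Rmult_le_compat_l; lra).
  lra.
Qed.

End Cells.

Lemma LnormQ_le q f B : 1 <= q -> 0 <= B ->
  RInt (fun X => powr (Rabs (f X)) q) 0 (2 * PI) <= B -> LnormQ q f <= 1 + B.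
Proof.
  intros Hq HB H; unfold LnormQ.
  eapply Rle_trans; [apply powr_le_1_plus |].
  - split; [apply Rdiv_lt_0_compat; lra |].
    apply Rmult_le_reg_r with q; [lra |]; field_simplify; lra.
  - apply Rplus_le_compat_l; unfold Rmax; destruct Rle_dec; lra.
Qed.

Lemma epsN_pos N : (1 <= N)%nat -> 0 < epsN N.
Proof.
  intros H; apply Rdiv_lt_0_compat; [pose proof PI_RGT_0; lra | apply lt_0_INR; lia].
Qed.

Lemma INR_mult_epsN N : (1 <= N)%nat -> INR N * epsN N = 2 * PI.
Proof. intros H; unfold epsN; field; apply not_0_INR; lia. Qed.

Section Interpolants.
Variables (N : nat) (x : Z -> R -> R).
Hypothesis HN : (1 <= N)%nat.
Hypothesis Hder : forall i t, ex_derive (x i) t.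

Let e := epsN N.
Let He : 0 < e := epsN_pos N HN.

Lemma position_continuous i t : continuous (x i) t.
Proof. apply (ex_derive_continuous (K := R_AbsRing) (V := R_NormedModule)), Hder. Qed.

Lemma exists_cell_Q X : 0 <= X < 2 * PI ->
  exists i, (i < N)%nat /\ INR i * e <= X < INR (S i) * e.
Proof. intros HX; apply exists_cell; auto; unfold e; rewrite INR_mult_epsN; auto. Qed.

Lemma yeps_cell i t X : (i < N)%nat -> INR i * e <= X < INR (S i) * e ->
  yeps N x t X = xi x i t + (X - INR i * e) / e * (xi x (S i) t - xi x i t).
Proof.
  intros Hi HX; unfold yeps; cbv zeta.
  exact (sumR_ind_cell e He N (fun j => xi x j t + (X - INR j * e) / e
                                  * (xi x (S j) t - xi x j t)) i X Hi HX).
Qed.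

Lemma ytil_cell i t X : (i < N)%nat -> INR i * e <= X < INR (S i) * e ->
  ytil N x t X = xi x i t.
Proof.
  intros Hi HX; unfold ytil; cbv zeta.
  exact (sumR_ind_cell e He N (fun j => xi x j t) i X Hi HX).
Qed.

Lemma Derive_yeps_cell i t X : (i < N)%nat -> INR i * e <= X < INR (S i) * e ->
  Derive (fun s => yeps N x s X) t
  = Derive (xi x i) t + (X - INR i * e) / e * (Derive (xi x (S i)) t - Derive (xi x i) t).
Proof.
  intros Hi HX.
  rewrite (Derive_ext _ (fun s => xi x i s + (X - INR i * e) / e * (xi x (S i) s - xi x i s)))
    by (intros; apply yeps_cell; auto).
  apply is_derive_unique; unfold xi; auto_derive; [repeat split; apply Hder |].
  change (Z.pos (Pos.of_succ_nat i)) with (Z.of_nat (S i)); ring.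
Qed.

Lemma Derive_ytil_cell i t X : (i < N)%nat -> INR i * e <= X < INR (S i) * e ->
  Derive (fun s => ytil N x s X) t = Derive (xi x i) t.
Proof. intros Hi HX; apply Derive_ext; intros; apply ytil_cell; auto. Qed.

Lemma Derive_X_yeps_cell i t X : (i < N)%nat -> INR i * e < X < INR (S i) * e ->
  Derive (fun Y => yeps N x t Y) X = (xi x (S i) t - xi x i t) / e.
Proof.
  intros Hi HX; apply is_derive_unique.
  apply is_derive_ext_loc
    with (fun Y => xi x i t + (Y - INR i * e) / e * (xi x (S i) t - xi x i t)).
  - apply locally_Rabs with (Rmin (X - INR i * e) (INR (S i) * e - X)); [apply Rmin_pos; lra |].
    intros Y HY; apply Rabs_def2 in HY.
    pose proof (Rmin_l (X - INR i * e) (INR (S i) * e - X)).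
    pose proof (Rmin_r (X - INR i * e) (INR (S i) * e - X)).
    symmetry; apply yeps_cell; auto; lra.
  - auto_derive; [lra | field; lra].
Qed.


Hypothesis Hper : forall i t, x (i + Z.of_nat N)%Z t = x i t + 2 * PI.

Lemma velocity_periodic t : Derive (xi x N) t = Derive (xi x O) t.
Proof.
  unfold xi; rewrite (Derive_ext _ (fun s => x 0%Z s + 2 * PI)) by (intros; apply (Hper 0%Z)).
  rewrite Derive_plus, Derive_const by (auto using ex_derive_const).
  rewrite Rplus_0_r; reflexivity.
Qed.

Lemma yeps_ramp t X : 0 <= X < 2 * PI -> yeps N x t X = ramp_sum e N (fun j => xi x j t) X.
Proof.
  intros HX; destruct (exists_cell_Q X HX) as [i [Hi HXi]].
  rewrite (yeps_cell i t X Hi HXi); apply (ramp_sum_cell e He N (fun j => xi x j t) i X Hi HXi).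
Qed.

Lemma Derive_yeps_ramp t X : 0 <= X < 2 * PI ->
  Derive (fun s => yeps N x s X) t = ramp_sum e N (fun j => Derive (xi x j) t) X.
Proof.
  intros HX; destruct (exists_cell_Q X HX) as [i [Hi HXi]].
  rewrite (Derive_yeps_cell i t X Hi HXi); apply (ramp_sum_cell e He N (fun j => Derive (xi x j) t) i X Hi HXi).
Qed.

Lemma yeps_abs_le t X B : (forall j, (j <= N)%nat -> Rabs (xi x j t) <= B) ->
  0 <= X < 2 * PI -> Rabs (yeps N x t X) <= 2 * B.
Proof.
  intros HB HX; destruct (exists_cell_Q X HX) as [i [Hi HXi]].
  rewrite (yeps_cell i t X Hi HXi).
  eapply Rle_trans; [apply Rabs_lerp_le, cell_coord_bound; auto; lra |].
  pose proof (HB i ltac:(lia)); pose proof (HB (S i) ltac:(lia)); lra.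
Qed.

Lemma Derive_yeps_abs_le t X B : (forall j, (j <= N)%nat -> Rabs (Derive (xi x j) t) <= B) ->
  0 <= X < 2 * PI -> Rabs (Derive (fun s => yeps N x s X) t) <= 2 * B.
Proof.
  intros HB HX; destruct (exists_cell_Q X HX) as [i [Hi HXi]].
  rewrite (Derive_yeps_cell i t X Hi HXi).
  eapply Rle_trans; [apply Rabs_lerp_le, cell_coord_bound; auto; lra |].
  pose proof (HB i ltac:(lia)); pose proof (HB (S i) ltac:(lia)); lra.
Qed.

Lemma yeps_continuous (Hvel : forall j t, continuous (Derive (xi x j)) t) t X :
  0 <= X < 2 * PI -> forall eps, 0 < eps -> exists d, 0 < d /\
    forall t' X', 0 <= X' < 2 * PI -> Rabs (t' - t) < d -> Rabs (X' - X) < d ->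
      Rabs (yeps N x t' X' - yeps N x t X) < eps
      /\ Rabs (Derive (fun s => yeps N x s X') t' - Derive (fun s => yeps N x s X) t) < eps.
Proof.
  intros HX eps Heps.
  destruct (ramp_sum_continuous e He N (fun j => xi x j) t X
              (fun j _ => position_continuous (Z.of_nat j) t) eps Heps) as [d1 [Hd1 H1]].
  destruct (ramp_sum_continuous e He N (fun j => Derive (xi x j)) t X
              (fun j _ => Hvel j t) eps Heps) as [d2 [Hd2 H2]].
  exists (Rmin d1 d2); split; [apply Rmin_pos; auto |]; intros t' X' HX' Ht HXX.
  pose proof (Rmin_l d1 d2); pose proof (Rmin_r d1 d2).
  rewrite !yeps_ramp, !Derive_yeps_ramp by auto.
  split; [apply H1 | apply H2]; lra.
Qed.

Lemma RInt_Derive_yeps_sq_le t :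
  RInt (fun X => powr (Rabs (Derive (fun s => yeps N x s X) t)) 2) 0 (2 * PI)
  <= 2 * sumR N (fun i => e * Derive (xi x i) t ^ 2).
Proof.
  set (v := fun j => Derive (xi x j) t).
  rewrite <- (INR_mult_epsN N HN); fold e.
  eapply Rle_trans; [eapply proj2, (RInt_cells_le e He _
    (fun i X => (v i + (X - INR i * e) / e * (v (S i) - v i)) ^ 2)
    (fun i => v i ^ 2 + v (S i) ^ 2) N) |].
  - intros i X _ _.
    apply (ex_derive_continuous (K := R_AbsRing) (V := R_NormedModule)); auto_derive; lra.
  - intros i X Hi HX; rewrite powr_abs_2, (Derive_yeps_cell i t X Hi) by lra; reflexivity.
  - intros i X Hi HX; apply lerp_sq_le, cell_coord_bound; lra.
  - rewrite (sumR_ext N _ (fun i => e * v i ^ 2 + e * v (S i) ^ 2)) by (intros; ring).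
    rewrite sumR_plus.
    pose proof (sumR_shift N (fun i => e * v i ^ 2)) as Hshift; cbv beta in Hshift.
    unfold v in *; rewrite velocity_periodic in Hshift; lra.
Qed.

Lemma RInt_Derive_ytil_sq_le t :
  RInt (fun X => powr (Rabs (Derive (fun s => ytil N x s X) t)) 2) 0 (2 * PI)
  <= sumR N (fun i => e * Derive (xi x i) t ^ 2).
Proof.
  rewrite <- (INR_mult_epsN N HN); fold e.
  eapply proj2, (RInt_cells_le e He _ (fun i _ => Derive (xi x i) t ^ 2)).
  - intros; apply continuous_const.
  - intros i X Hi HX; rewrite powr_abs_2, (Derive_ytil_cell i t X Hi) by lra; reflexivity.
  - intros; apply Rle_refl.
Qed.

Lemma RInt_Derive_X_yeps_powr_le p t :
  RInt (fun X => powr (Rabs (Derive (fun Y => yeps N x t Y) X)) p) 0 (2 * PI)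
  <= sumR N (fun i => e * powr (Rabs ((xi x (S i) t - xi x i t) / e)) p).
Proof.
  rewrite <- (INR_mult_epsN N HN); fold e.
  eapply proj2, (RInt_cells_le e He _ (fun i _ => powr (Rabs ((xi x (S i) t - xi x i t) / e)) p)).
  - intros; apply continuous_const.
  - intros i X Hi HX; rewrite (Derive_X_yeps_cell i t X Hi HX); reflexivity.
  - intros; apply Rle_refl.
Qed.

Lemma RInt_ytil_yeps_powr_le p t : 1 <= p ->
  RInt (fun X => powr (Rabs (ytil N x t X - yeps N x t X)) p) 0 (2 * PI)
  <= Rpower e p * sumR N (fun i => e * powr (Rabs ((xi x (S i) t - xi x i t) / e)) p).
Proof.
  intros Hp; set (d := fun i => xi x (S i) t - xi x i t).
  rewrite <- (INR_mult_epsN N HN); fold e.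
  eapply Rle_trans; [eapply proj2, (RInt_cells_le e He _
    (fun i X => powr (Rabs ((X - INR i * e) / e * d i)) p)
    (fun i => powr (Rabs (d i)) p) N) |].
  - intros i X _ _.
    apply continuous_comp with (g := fun u => powr u p); [| apply powr_continuous; lra].
    apply continuous_comp; [| apply continuous_Rabs].
    apply (ex_derive_continuous (K := R_AbsRing) (V := R_NormedModule)); auto_derive; lra.
  - intros i X Hi HX.
    rewrite (ytil_cell i t X Hi), (yeps_cell i t X Hi), <- Rabs_Ropp by lra.
    unfold d; do 3 f_equal; ring.
  - intros i X Hi HX; apply powr_le_compat; [lra |].
    pose proof (cell_coord_bound e He i X ltac:(lra)).
    rewrite Rabs_mult, (Rabs_right ((X - INR i * e) / e)) by lra.
    pose proof (Rabs_pos (d i)); nra.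
  - rewrite <- sumR_scal; apply Req_le, sumR_ext; intros i _.
    replace (d i) with (e * ((xi x (S i) t - xi x i t) / e)) by (unfold d; field; lra).
    rewrite Rabs_mult, (Rabs_right e), powr_mult by (auto using Rabs_pos; lra); ring.
Qed.

End Interpolants.

Lemma is_derive_sumR n (f : nat -> R -> R) df t :
  (forall i, (i < n)%nat -> is_derive (f i) t (df i)) ->
  is_derive (fun s => sumR n (fun i => f i s)) t (sumR n df).
Proof.
  induction n; intros H; simpl.
  - apply (is_derive_const (K := R_AbsRing) (V := R_NormedModule)).
  - apply (is_derive_plus (K := R_AbsRing) (V := R_NormedModule)
             (fun s => sumR n (fun i => f i s)) (f n)); auto.
Qed.

Section EnergyConservation.
Variables (N : nat) (x : Z -> R -> R) (rho : R) (W : R -> R).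
Hypothesis HN : (1 <= N)%nat.
Hypothesis Hrho : 0 < rho.
Hypothesis Hper : forall i t, x (i + Z.of_nat N)%Z t = x i t + 2 * PI.
Hypothesis Hder : forall i t, ex_derive (x i) t.
Hypothesis HW1 : forall u, ex_derive W u.
Hypothesis Hmotion : forall i t,
  is_derive (fun s => epsN N * rho * Derive (x i) s) t
    (Derive W ((x (i + 1)%Z t - x i t) / epsN N)
     - Derive W ((x i t - x (i - 1)%Z t) / epsN N)).

Let e := epsN N.
Let He : 0 < e := epsN_pos N HN.

Lemma acceleration i t : is_derive (Derive (x i)) t
  ((Derive W ((x (i + 1)%Z t - x i t) / e) - Derive W ((x i t - x (i - 1)%Z t) / e)) / (e * rho)).
Proof.
  pose proof (is_derive_scal _ t (/ (e * rho)) _ (Hmotion i t)) as H.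
  replace (_ / (e * rho)) with (/ (e * rho) * (Derive W ((x (i + 1)%Z t - x i t) / e)
    - Derive W ((x i t - x (i - 1)%Z t) / e))) by (field; split; lra).
  apply is_derive_ext with (f := fun s => / (e * rho) * (e * rho * Derive (x i) s)); auto.
  intros s; simpl; field; split; lra.
Qed.

Lemma velocity_continuous i t : continuous (Derive (x i)) t.
Proof.
  apply (ex_derive_continuous (K := R_AbsRing) (V := R_NormedModule)).
  eexists; apply acceleration.
Qed.

(* Power transmitted by the spring (k-1, k) to node k; the energy of cell i
   changes at rate [work_rate (S i) - work_rate i], so the total telescopes. *)
Definition work_rate t (k : nat) : R :=
  Derive W ((x (Z.of_nat k) t - x (Z.of_nat k - 1)%Z t) / e) * Derive (x (Z.of_nat k)) t.

Lemma energy_cell_derive i t :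
  is_derive (fun s => e * rho / 2 * Derive (xi x i) s ^ 2
                      + e * W ((xi x (S i) s - xi x i s) / e)) t
    (work_rate t (S i) - work_rate t i).
Proof.
  assert (Hacc := acceleration (Z.of_nat i) t).
  unfold xi; auto_derive.
  - repeat split; auto; eexists; exact Hacc.
  - change (Z.pos (Pos.of_succ_nat i)) with (Z.of_nat (S i)).
    change (fun s => x (Z.of_nat (S i)) s) with (x (Z.of_nat (S i))).
    change (fun s => x (Z.of_nat i) s) with (x (Z.of_nat i)).
    change (fun s => Derive (x (Z.of_nat i)) s) with (Derive (x (Z.of_nat i))).
    change (fun u => W u) with W.
    rewrite (is_derive_unique _ t _ Hacc).
    unfold work_rate.
    replace (Z.of_nat (S i) - 1)%Z with (Z.of_nat i) by lia.
    replace (Z.of_nat i + 1)%Z with (Z.of_nat (S i)) by lia.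
    change ((x (Z.of_nat (S i)) t + - x (Z.of_nat i) t) * / e)
      with ((x (Z.of_nat (S i)) t - x (Z.of_nat i) t) / e).
    set (A := Derive W ((x (Z.of_nat (S i)) t - x (Z.of_nat i) t) / e)).
    set (B := Derive W ((x (Z.of_nat i) t - x (Z.of_nat i - 1) t) / e)).
    field; lra.
Qed.

Lemma energy_derive_0 t : is_derive (energy N rho W x) t 0.
Proof.
  replace 0 with (sumR N (fun i => work_rate t (S i) - work_rate t i)).
  { apply is_derive_sumR; intros; apply energy_cell_derive. }
  rewrite sumR_telescope; unfold work_rate.
  replace (Z.of_nat N - 1)%Z with (-1 + Z.of_nat N)%Z by lia.
  replace (Z.of_nat N) with (0 + Z.of_nat N)%Z at 1 by lia.
  rewrite (Hper 0%Z), (Hper (-1)%Z).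
  change (Derive (x (Z.of_nat N)) t) with (Derive (xi x N) t).
  rewrite (velocity_periodic N x Hder Hper).
  change (Derive (xi x O) t) with (Derive (x 0%Z) t); simpl.
  replace (x 0%Z t + 2 * PI - (x (-1)%Z t + 2 * PI)) with (x 0%Z t - x (-1)%Z t) by ring.
  ring.
Qed.

Lemma energy_conserved t : energy N rho W x t = energy N rho W x 0.
Proof.
  destruct (MVT_gen (energy N rho W x) 0 t (fun _ => 0)) as [c [_ Hc]]; [| | lra].
  - intros; apply energy_derive_0.
  - intros; apply continuity_pt_filterlim.
    apply (ex_derive_continuous (K := R_AbsRing) (V := R_NormedModule)).
    eexists; apply energy_derive_0.
Qed.

End EnergyConservation.

Lemma Rabs_le_of_Derive_bound (f : R -> R) V t :
  (forall s, ex_derive f s) -> (forall s, Rabs (Derive f s) <= V) ->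
  Rabs (f t) <= Rabs (f 0) + V * Rabs t.
Proof.
  intros Hf HV.
  destruct (MVT_gen f 0 t (Derive f)) as [c [_ Hc]].
  - intros; apply Derive_correct, Hf.
  - intros; apply continuity_pt_filterlim.
    apply (ex_derive_continuous (K := R_AbsRing) (V := R_NormedModule)), Hf.
  - replace (f t) with (f 0 + Derive f c * t) by lra.
    eapply Rle_trans; [apply Rabs_triang |]; rewrite Rabs_mult.
    pose proof (HV c); pose proof (Rabs_pos t); nra.
Qed.

Section EnergyBounds.
Variables (N : nat) (x : Z -> R -> R) (rho : R) (W : R -> R) (t E : R).
Hypothesis HN : (1 <= N)%nat.
Hypothesis Hrho : 0 < rho.
Hypothesis HW0 : forall u, 0 <= W u.
Hypothesis HE : energy N rho W x t <= E.

Let e := epsN N.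
Let He : 0 < e := epsN_pos N HN.

Lemma energy_split : energy N rho W x t
  = rho / 2 * sumR N (fun i => e * Derive (xi x i) t ^ 2)
    + sumR N (fun i => e * W ((xi x (S i) t - xi x i t) / e)).
Proof.
  unfold energy; cbv zeta; rewrite sumR_plus, <- sumR_scal; f_equal.
  apply sumR_ext; intros; fold e; field.
Qed.

Lemma potential_sum_ge0 : 0 <= sumR N (fun i => e * W ((xi x (S i) t - xi x i t) / e)).
Proof. apply sumR_ge0; intros; apply Rmult_le_pos; [lra | apply HW0]. Qed.

Lemma kinetic_sum_ge0 : 0 <= sumR N (fun i => e * Derive (xi x i) t ^ 2).
Proof. apply sumR_ge0; intros; apply Rmult_le_pos; [lra | apply pow2_ge_0]. Qed.

Lemma kinetic_sum_le : sumR N (fun i => e * Derive (xi x i) t ^ 2) <= 2 * E / rho.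
Proof.
  pose proof energy_split; pose proof potential_sum_ge0.
  apply Rmult_le_reg_l with (rho / 2); [lra |].
  replace (rho / 2 * (2 * E / rho)) with E by (field; lra); lra.
Qed.

Lemma powr_strain_sum_le p c1 c2 : 0 < c1 ->
  (forall u, Rmax 0 (c1 * powr (Rabs u) p - c2) <= W u) ->
  sumR N (fun i => e * powr (Rabs ((xi x (S i) t - xi x i t) / e)) p)
  <= (E + 2 * PI * c2) / c1.
Proof.
  intros Hc1 Hlow.
  pose proof energy_split.
  apply Rmult_le_reg_l with c1; [lra |].
  replace (c1 * ((E + 2 * PI * c2) / c1)) with (E + 2 * PI * c2) by (field; lra).
  rewrite <- sumR_scal, <- (INR_mult_epsN N HN); fold e.
  apply Rle_trans with (sumR N (fun i => e * W ((xi x (S i) t - xi x i t) / e)) + INR N * e * c2).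
  - rewrite Rmult_assoc, <- sumR_const, <- sumR_plus; apply sumR_le; intros i _.
    pose proof (Hlow ((xi x (S i) t - xi x i t) / e)) as Hl.
    pose proof (Rmax_r 0 (c1 * powr (Rabs ((xi x (S i) t - xi x i t) / e)) p - c2)).
    nra.
  - assert (0 <= rho / 2 * sumR N (fun i => e * Derive (xi x i) t ^ 2))
      by (apply Rmult_le_pos; [lra | exact kinetic_sum_ge0]).
    lra.
Qed.

End EnergyBounds.

Section Estimates.
Variables (N : nat) (x : Z -> R -> R) (p Ek K : R).
Hypothesis HN : (1 <= N)%nat.
Hypothesis Hder : forall i t, ex_derive (x i) t.
Hypothesis Hper : forall i t, x (i + Z.of_nat N)%Z t = x i t + 2 * PI.
Hypothesis Hp : 1 <= p.
Hypothesis HEk : 0 <= Ek.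
Hypothesis HK : 0 < K.
Hypothesis Hkin : forall t, sumR N (fun i => epsN N * Derive (xi x i) t ^ 2) <= Ek.
Hypothesis Hpot : forall t,
  sumR N (fun i => epsN N * powr (Rabs ((xi x (S i) t - xi x i t) / epsN N)) p) <= K.

Let e := epsN N.
Let He : 0 < e := epsN_pos N HN.

Lemma velocity_abs_le t j : (j <= N)%nat -> Rabs (Derive (xi x j) t) <= 1 + Ek / e.
Proof.
  assert (Hlt : forall j, (j < N)%nat -> Rabs (Derive (xi x j) t) <= 1 + Ek / e).
  { intros k Hk; set (v := Derive (xi x k) t).
    assert (Hv : e * v ^ 2 <= Ek).
    { eapply Rle_trans; [| apply (Hkin t)].
      apply (sumR_term_le N (fun i => e * Derive (xi x i) t ^ 2)); auto.
      intros; apply Rmult_le_pos; [lra | apply pow2_ge_0]. }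
    assert (v ^ 2 <= Ek / e) by (apply Rmult_le_reg_l with e; [lra | field_simplify; lra]).
    rewrite <- (pow2_abs v) in *; pose proof (Rabs_pos v); nra. }
  intros Hj; destruct (Nat.eq_dec j N) as [-> | Hjn].
  - rewrite velocity_periodic by auto; apply Hlt; lia.
  - apply Hlt; lia.
Qed.

Lemma yeps_bounded T : exists B, forall t X, Rabs t <= T -> 0 <= X < 2 * PI ->
  Rabs (yeps N x t X) <= B.
Proof.
  exists (2 * (sumR (S N) (fun j => Rabs (xi x j 0)) + (1 + Ek / e) * T)).
  intros t X Ht HX; apply yeps_abs_le; auto; intros j Hj.
  eapply Rle_trans; [apply (Rabs_le_of_Derive_bound _ (1 + Ek / e)) |].
  - intros; apply Hder.
  - intros; apply velocity_abs_le; auto.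
  - assert (0 <= Ek / e) by (apply Rdiv_le_0_compat; lra).
    pose proof (sumR_term_le (S N) (fun j => Rabs (xi x j 0)) j
                  (fun i _ => Rabs_pos _) ltac:(lia)).
    nra.
Qed.

Lemma Derive_yeps_bounded : exists B, forall t X, 0 <= X < 2 * PI ->
  Rabs (Derive (fun s => yeps N x s X) t) <= B.
Proof.
  exists (2 * (1 + Ek / e)); intros t X HX.
  apply Derive_yeps_abs_le; auto; intros; apply velocity_abs_le; auto.
Qed.

Lemma LnormQ_derivatives_le t :
  LnormQ 2 (fun X => Derive (fun s => yeps N x s X) t)
  + LnormQ p (fun X => Derive (fun Y => yeps N x t Y) X)
  + LnormQ 2 (fun X => Derive (fun s => ytil N x s X) t) <= 3 + 3 * Ek + K.
Proof.
  pose proof (Hkin t).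
  assert (LnormQ 2 (fun X => Derive (fun s => yeps N x s X) t) <= 1 + 2 * Ek).
  { apply LnormQ_le; [lra | lra |].
    eapply Rle_trans; [apply RInt_Derive_yeps_sq_le; auto | lra]. }
  assert (LnormQ p (fun X => Derive (fun Y => yeps N x t Y) X) <= 1 + K).
  { apply LnormQ_le; [exact Hp | lra |].
    eapply Rle_trans; [apply RInt_Derive_X_yeps_powr_le; auto | apply Hpot]. }
  assert (LnormQ 2 (fun X => Derive (fun s => ytil N x s X) t) <= 1 + Ek).
  { apply LnormQ_le; [lra | lra |].
    eapply Rle_trans; [apply RInt_Derive_ytil_sq_le; auto | lra]. }
  lra.
Qed.

Lemma LnormQ_ytil_yeps_le t : LnormQ p (fun X => ytil N x t X - yeps N x t X) <= (1 + K) * e.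
Proof.
  unfold LnormQ.
  eapply Rle_trans; [apply powr_le_compat; [apply Rdiv_le_0_compat; lra |] |].
  - eapply Rle_trans; [apply RInt_ytil_yeps_powr_le; auto |].
    apply Rmult_le_compat_l; [left; apply Rpower_pos | apply (Hpot t)].
  - rewrite powr_Rpower_root by (exact He || lra).
    assert (Hroot : powr K (1 / p) <= 1 + K).
    { rewrite <- (Rmax_right 0 K) at 2 by lra; apply powr_le_1_plus; split.
      - apply Rdiv_lt_0_compat; lra.
      - apply Rmult_le_reg_r with p; [lra | field_simplify; lra]. }
    rewrite Rmult_comm; apply Rmult_le_compat_r; lra.
Qed.

End Estimates.

Theorem lemma5p1 :
  forall (rho c1 c2 E0 : R), 0 < rho -> 0 < c1 -> 0 < c2 ->
  exists C : R,
  forall (p c0 : R) (W : R -> R),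
    2 <= p -> 0 < c0 ->
    (forall u, ex_derive_n W 1 u /\ ex_derive_n W 2 u /\ ex_derive_n W 3 u
               /\ continuous (Derive_n W 3) u) ->
    strictly_convex W ->
    (forall u, c0 <= Derive_n W 2 u) ->
    (forall u, Rmax 0 (c1 * powr (Rabs u) p - c2) <= W u) ->
    (forall d, 0 < d -> exists M, forall u, M < Rabs u ->
        Rabs (Derive W u / powr (Rabs u) p) < d) ->
  forall (N : nat) (x : Z -> R -> R),
    (1 <= N)%nat ->
    (forall i t, x (i + Z.of_nat N)%Z t = x i t + 2 * PI) ->
    (forall i t, ex_derive (x i) t) ->
    (forall i t,
        is_derive (fun s => epsN N * rho * Derive (x i) s) t
          (Derive W ((x (i + 1)%Z t - x i t) / epsN N)
           - Derive W ((x i t - x (i - 1)%Z t) / epsN N))) ->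
    energy N rho W x 0 <= E0 ->
    (forall t X, 0 <= X < 2 * PI -> forall e, 0 < e -> exists d, 0 < d /\
        forall t' X', 0 <= X' < 2 * PI -> Rabs (t' - t) < d -> Rabs (X' - X) < d ->
          Rabs (yeps N x t' X' - yeps N x t X) < e
          /\ Rabs (Derive (fun s => yeps N x s X') t'
                   - Derive (fun s => yeps N x s X) t) < e) /\
    (forall T, exists B, forall t X, Rabs t <= T -> 0 <= X < 2 * PI ->
        Rabs (yeps N x t X) <= B) /\
    (exists B, forall t X, 0 <= X < 2 * PI ->
        Rabs (Derive (fun s => yeps N x s X) t) <= B) /\
    (forall t,
        LnormQ 2 (fun X => Derive (fun s => yeps N x s X) t)
        + LnormQ p (fun X => Derive (fun Z => yeps N x t Z) X)
        + LnormQ 2 (fun X => Derive (fun s => ytil N x s X) t) <= C) /\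
    (forall t, LnormQ p (fun X => ytil N x t X - yeps N x t X) <= C * epsN N).
Proof.
  intros rho c1 c2 E0 Hrho Hc1 Hc2.
  set (K := (Rabs E0 + 2 * PI * c2) / c1).
  assert (HK : 0 < K).
  { apply Rdiv_lt_0_compat; [pose proof (Rabs_pos E0); pose proof PI_RGT_0; nra | lra]. }
  exists (3 + 6 * Rabs E0 / rho + K).
  intros p c0 W Hp _ HW _ _ Hlow _ N x HN Hper Hder Hmotion HE0.
  assert (HW1 : forall u, ex_derive W u) by (intros u; apply (HW u)).
  assert (HW0 : forall u, 0 <= W u) by (intros u; eapply Rle_trans; [apply Rmax_l | apply Hlow]).
  assert (HE : forall t, energy N rho W x t <= Rabs E0).
  { intros t; rewrite (energy_conserved N x rho W HN Hrho Hper Hder HW1 Hmotion).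
    pose proof (Rle_abs E0); lra. }
  pose proof (fun t => kinetic_sum_le N x rho W t _ HN Hrho HW0 (HE t)) as Hkin.
  pose proof (fun t => powr_strain_sum_le N x rho W t _ HN Hrho (HE t) p c1 c2 Hc1 Hlow) as Hpot.
  assert (HEk : 0 <= 2 * Rabs E0 / rho).
  { apply Rdiv_le_0_compat; [pose proof (Rabs_pos E0) |]; lra. }
  split; [| split; [| split; [| split]]].
  - intros t X; apply yeps_continuous; auto.
    intros j s; apply (velocity_continuous N x rho W HN Hrho Hmotion).
  - intros T; apply (yeps_bounded N x (2 * Rabs E0 / rho)); auto.
  - apply (Derive_yeps_bounded N x (2 * Rabs E0 / rho)); auto.
  - intros t; eapply Rle_trans.
    + apply (LnormQ_derivatives_le N x p (2 * Rabs E0 / rho) K); auto; lra.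
    + apply Req_le; field; lra.
  - intros t; eapply Rle_trans.
    + apply (LnormQ_ytil_yeps_le N x p K); auto; lra.
    + apply Rmult_le_compat_r; [left; apply epsN_pos; auto |].
      pose proof (Rabs_pos E0); assert (0 <= Rabs E0 / rho) by (apply Rdiv_le_0_compat; lra).
      lra.
Qed.
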